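(* Let $\lambda\in\mathbb{C}\setminus\{\pm\pi i\}$ and let $N_\lambda$ be the Newton map of $F_\lambda(z)=e^{\lambda z}\sin\pi z$. Its exponential projection $g_\lambda$, given by $$g_\lambda(w)=we^{2\pi iM_\lambda(w)},\qquad M_\lambda(w)=-\frac{w-1}{(\lambda+\pi i)w-(\lambda-\pi i)},$$ has a unique essential singularity at $B_\lambda=\frac{\lambda-\pi i}{\lambda+\pi i}$. Moreover: (i) the set of fixed points of $g_\lambda$ consists of $0$ and $\infty$, with multipliers $g_\lambda'(0)=\exp\!\big(\frac{2\pi i}{\pi i-\lambda}\big)$ and $g_\lambda'(\infty)=\exp\!\big(\frac{2\pi i}{\pi i+\lambda}\big)$, and, for $\sigma\in\mathbb{Z}$, the points $w^*_\sigma=\frac{1+(\lambda-\pi i)\sigma}{1+(\lambda+\pi i)\sigma}$, with $g_\lambda'(w^*_\sigma)=1-\big(1+(\lambda-\pi i)\sigma\big)\big(1+(\lambda+\pi i)\sigma\big)$; (ii) the set of singular values of $g_\lambda$ consists of the fixed asymptotic values $0$ and $\infty$, the fixed critical point $w^*_0=1$, and the image of the only free critical point $C_\lambda=B_\lambda^2$.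
   Context: The exponential projection $g_\lambda$ satisfies $g_\lambda(e^{2\pi iz})=e^{2\pi iN_\lambda(z)}$; here $N_\lambda(z)=z+M_\lambda(e^{2\pi iz})$. The multiplier at $\infty$ is the derivative in the local coordinate $1/w$. Singular values are the closure of the set of critical values and asymptotic values (limits of $g_\lambda$ along paths tending to an essential singularity). *)

From Stdlib Require Import Reals ZArith.
From Coquelicot Require Import Coquelicot.
Open Scope C_scope.

Definition pii : C := (0%R, PI).

Definition Cexp (z : C) : C :=
  ((exp (fst z) * cos (snd z))%R, (exp (fst z) * sin (snd z))%R).

Definition Mlam (lam w : C) : C :=
  - (w - 1) / ((lam + pii) * w - (lam - pii)).

Definition glam (lam w : C) : C := w * Cexp (2 * pii * Mlam lam w).

Definition Blam (lam : C) : C := (lam - pii) / (lam + pii).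
Definition Clam (lam : C) : C := Blam lam * Blam lam.

(* the fixed points w*_sigma (finite when the denominator is nonzero) *)
Definition wstar_num (lam : C) (s : Z) : C := 1 + (lam - pii) * RtoC (IZR s).
Definition wstar_den (lam : C) (s : Z) : C := 1 + (lam + pii) * RtoC (IZR s).

Inductive sphere : Type := Fin (z : C) | Inf.

(* g_lambda as a self-map of the sphere (minus B_lambda), extended to infinity
   by g(infty) = infty; its value at B_lambda is irrelevant. *)
Definition gS (lam : C) (p : sphere) : sphere :=
  match p with Fin w => Fin (glam lam w) | Inf => Inf end.

(* standard charts: around a finite point the identity coordinate,
   around infinity the coordinate u = 1/w. *)
Definition chart_at (p : sphere) (u : C) : sphere :=
  match p with
  | Fin _ => Fin u
  | Inf => if Req_EM_T (fst u) 0 then (if Req_EM_T (snd u) 0 then Inf else Fin (/ u))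
           else Fin (/ u)
  end.

Definition coord_at (p : sphere) (q : sphere) : C :=
  match p, q with
  | Fin _, Fin w => w
  | Fin z, Inf => z   (* junk: never used for maps sending finite points near p to finite points *)
  | Inf, Fin w => / w
  | Inf, Inf => 0
  end.

Definition local_expr (f : sphere -> sphere) (p : sphere) (u : C) : C :=
  coord_at (f p) (f (chart_at p u)).

(* f has derivative m at p in local coordinates (for a fixed point p this is
   the multiplier of p) *)
Definition local_deriv (f : sphere -> sphere) (p : sphere) (m : C) : Prop :=
  is_derive (local_expr f p) (coord_at p p) m.

(* closeness on the sphere: a neighbourhood base of p indexed by eps > 0 *)
Definition sph_close (eps : R) (p q : sphere) : Prop :=
  match p, q with
  | Fin z, Fin w => (Cmod (w - z) < eps)%R
  | Fin _, Inf => False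
  | Inf, Inf => True
  | Inf, Fin w => (/ eps < Cmod w)%R
  end.

Definition sph_closure (S : sphere -> Prop) (p : sphere) : Prop :=
  forall eps : R, (0 < eps)%R -> exists q, S q /\ sph_close eps p q.

Definition critical_point (lam : C) (p : sphere) : Prop :=
  p <> Fin (Blam lam) /\ local_deriv (gS lam) p 0.

Definition critical_value (lam : C) (a : sphere) : Prop :=
  exists p, critical_point lam p /\ a = gS lam p.

Definition asymptotic_value (lam : C) (a : sphere) : Prop :=
  exists gamma : R -> C,
    (forall t : R, continuous gamma t) /\
    (forall t : R, gamma t <> Blam lam) /\
    filterlim gamma (Rbar_locally p_infty) (locally (Blam lam)) /\
    (forall eps : R, (0 < eps)%R -> exists T : R, forall t : R, (T < t)%R ->
        sph_close eps a (Fin (glam lam (gamma t)))).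

Definition singular_value (lam : C) (a : sphere) : Prop :=
  sph_closure (fun q => critical_value lam q \/ asymptotic_value lam q) a.

Definition essential_singularity_at (lam : C) (b : C) : Prop :=
  ~ exists a : sphere, forall eps : R, (0 < eps)%R -> exists delta : R, (0 < delta)%R /\
      forall w : C, w <> b -> (Cmod (w - b) < delta)%R -> sph_close eps a (Fin (glam lam w)).

(* Write [M] for the Möbius map [M_lambda], with [M(B_lambda) = oo], and [D] for its
   denominator, so that [g(w) = w e^(2 pi i M(w))] and [|g(w)| = |w| e^(-2 pi Im M(w))].
   A point [w <> 0] is fixed iff [M(w)] is an integer [s], i.e. [w = w*_s = M^-1(s)].
   Since [g'(w) = e^(2 pi i M(w)) (D(w)^2 - (2 pi i)^2 w) / D(w)^2] and the quadratic
   [D(w)^2 - (2 pi i)^2 w] has roots [1] and [B_lambda^2], these are the critical points.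
   Near [B_lambda], [g] fixes [M^-1(k)] and negates [M^-1(k + 1/2)] for all large integers
   [k], so it has no limit there. On the path [M^-1(i s e^t - 1/(lam + pi i))], which tends
   to [B_lambda], [|g|] is comparable to [e^(-2 pi s e^t)]; this gives the asymptotic values
   [0] ([s = 1]) and [oo] ([s = -1]). Conversely, if [g -> c <> 0] along a path to
   [B_lambda], then [Im M] stays bounded while [|M| -> oo], so [Re M] passes through an
   integer [k] and through [k + 1/2] arbitrarily late; there [g(w)] is a positive,
   resp. negative, multiple of [w ~ B_lambda], and both cannot be close to [c]. *)
From Stdlib Require Import Reals ZArith List Lra Psatz.
From Coquelicot Require Import Coquelicot.
Open Scope C_scope.

Section Real_estimates.
Local Open Scope R_scope.

Lemma exp_sub_1_sub_bound (x : R) : Rabs x <= /2 -> 0 <= exp x - 1 - x <= 2 * x ^ 2.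
Proof.
  intros Hx. apply Rabs_le_between in Hx.
  pose proof (exp_ineq1_le x). pose proof (exp_ineq1_le (- x)). pose proof (exp_pos x).
  assert (exp x * exp (- x) = 1) by (rewrite <- exp_plus, Rplus_opp_r; apply exp_0).
  split; nra.
Qed.

Lemma sin_taylor_bound (y : R) :
  Rabs y <= 1 -> Rabs (sin y) <= Rabs y /\ Rabs (sin y - y) <= Rabs y ^ 3 / 6.
Proof.
  assert (Hpos : forall a, 0 <= a <= 1 -> a - a ^ 3 / 6 <= sin a <= a /\ a ^ 3 <= a).
  { intros a Ha. destruct (pre_sin_bound a 0 ltac:(lra) ltac:(lra)) as [H1 H2].
    unfold sin_approx, sin_term in H1, H2. simpl in H1, H2.
    assert (a * a <= 1) by nra. nra. }
  intros Hy. destruct (Rle_dec 0 y).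
  - rewrite (Rabs_right y) in * by lra. destruct (Hpos y ltac:(lra)).
    split; apply Rabs_le; lra.
  - rewrite (Rabs_left y) in * by lra. destruct (Hpos (- y) ltac:(lra)). rewrite sin_neg in *.
    split; apply Rabs_le; lra.
Qed.

Lemma cos_taylor_bound (y : R) : Rabs y <= 2 -> Rabs (cos y - 1) <= y ^ 2 / 2.
Proof.
  intros Hy. apply Rabs_le_between in Hy.
  destruct (pre_cos_bound y 0 ltac:(lra) ltac:(lra)) as [H1 H2].
  unfold cos_approx, cos_term in H1, H2. simpl in H1, H2.
  assert (y * y <= 4) by nra. apply Rabs_le. split; nra.
Qed.

Lemma sin_2PI_IZR (k : Z) : sin (2 * PI * IZR k) = 0.
Proof. apply sin_eq_0_1. exists (2 * k)%Z. rewrite mult_IZR. ring. Qed.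

Lemma cos_2PI_IZR (k : Z) : cos (2 * PI * IZR k) = 1.
Proof.
  replace (2 * PI * IZR k) with (2 * (IZR k * PI)) by ring.
  rewrite cos_2a_sin, sin_eq_0_1 by (exists k; reflexivity). ring.
Qed.

Lemma exp_cos_taylor_bound (x y : R) : Rabs x <= /2 -> Rabs y <= /2 ->
  Rabs (exp x * cos y - 1 - x) <= 2 * x ^ 2 + y ^ 2.
Proof.
  intros Hx Hy. destruct (exp_sub_1_sub_bound x Hx) as [A0 A2].
  pose proof (cos_taylor_bound y ltac:(lra)). apply Rabs_le_between in Hx.
  replace (exp x * cos y - 1 - x) with ((exp x - 1 - x) + exp x * (cos y - 1)) by ring.
  eapply Rle_trans; [apply Rabs_triang |].
  rewrite Rabs_mult, (Rabs_right (exp x)), (Rabs_right (exp x - 1 - x))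
    by (pose proof (exp_pos x); lra).
  assert (exp x <= 2) by nra.
  assert (exp x * Rabs (cos y - 1) <= 2 * (y ^ 2 / 2))
    by (apply Rmult_le_compat; [apply Rlt_le, exp_pos | apply Rabs_pos | lra | lra]).
  lra.
Qed.

Lemma exp_sin_taylor_bound (x y : R) : Rabs x <= /2 -> Rabs y <= /2 ->
  Rabs (exp x * sin y - y) <= x ^ 2 + 2 * y ^ 2.
Proof.
  intros Hx Hy. destruct (exp_sub_1_sub_bound x Hx) as [A0 A2].
  destruct (sin_taylor_bound y ltac:(lra)) as [S1 S3].
  rewrite <- (pow2_abs x), <- (pow2_abs y) in *.
  pose proof (Rabs_pos x). pose proof (Rabs_pos y).
  replace (exp x * sin y - y) with ((exp x - 1) * sin y + (sin y - y)) by ring.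
  eapply Rle_trans; [apply Rabs_triang |]. rewrite Rabs_mult.
  assert (Rabs (exp x - 1) <= 2 * Rabs x).
  { replace (exp x - 1) with (x + (exp x - 1 - x)) by ring.
    eapply Rle_trans; [apply Rabs_triang |]. rewrite (Rabs_right (exp x - 1 - x)) by lra. nra. }
  assert (Rabs y ^ 3 / 6 <= Rabs y ^ 2 / 12) by nra.
  assert (Rabs (exp x - 1) * Rabs (sin y) <= 2 * Rabs x * Rabs y)
    by (apply Rmult_le_compat; try apply Rabs_pos; lra).
  assert (0 <= (Rabs x - Rabs y) ^ 2) by apply pow2_ge_0.
  nra.
Qed.

End Real_estimates.

Lemma Cmod_le_Rabs_plus (u : C) : (Cmod u <= Rabs (fst u) + Rabs (snd u))%R.
Proof.
  unfold Cmod. rewrite <- (sqrt_pow2 (Rabs (fst u) + Rabs (snd u)))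
    by (pose proof (Rabs_pos (fst u)); pose proof (Rabs_pos (snd u)); lra).
  apply sqrt_le_1_alt. rewrite <- (pow2_abs (fst u)), <- (pow2_abs (snd u)).
  pose proof (Rabs_pos (fst u)); pose proof (Rabs_pos (snd u)); nra.
Qed.

Lemma Rabs_fst_le_Cmod (u : C) : (Rabs (fst u) <= Cmod u)%R.
Proof. eapply Rle_trans; [apply Rmax_l | apply Rmax_Cmod]. Qed.

Lemma Rabs_snd_le_Cmod (u : C) : (Rabs (snd u) <= Cmod u)%R.
Proof. eapply Rle_trans; [apply Rmax_r | apply Rmax_Cmod]. Qed.

Lemma Cmod_sub_le (x y : C) : (Cmod x <= Cmod y + Cmod (x - y))%R.
Proof. replace x with (y + (x - y)) at 1 by ring. apply Cmod_triangle. Qed.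

Lemma Cmod_RtoC_pos (r : R) : (0 <= r)%R -> Cmod (RtoC r) = r.
Proof. intros Hr. rewrite Cmod_R. apply Rabs_right. lra. Qed.

Lemma Cmult_integral (x y : C) : x * y = 0 -> x = 0 \/ y = 0.
Proof.
  intros H. destruct (Ceq_dec x 0) as [Hx | Hx]; [left; exact Hx | right].
  replace y with (/ x * (x * y)) by (field; exact Hx). rewrite H. ring.
Qed.

Lemma Cinv_neq_0 (z : C) : z <> 0 -> / z <> 0.
Proof. intros Hz E. apply C1_nz. rewrite <- (Cinv_r z Hz), E. ring. Qed.

Lemma Cexp_plus (u v : C) : Cexp (u + v) = Cexp u * Cexp v.
Proof.
  destruct u as [a b], v as [c d]. unfold Cexp. simpl.
  rewrite exp_plus, cos_plus, sin_plus.
  apply injective_projections; simpl; ring.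
Qed.

Lemma Cexp_RtoC (r : R) : Cexp (RtoC r) = RtoC (exp r).
Proof. unfold Cexp. simpl. rewrite cos_0, sin_0. apply injective_projections; simpl; ring. Qed.

Lemma Cexp_0 : Cexp 0 = 1.
Proof. rewrite Cexp_RtoC, exp_0. reflexivity. Qed.

Lemma Cmod_Cexp (u : C) : Cmod (Cexp u) = exp (fst u).
Proof.
  destruct u as [a b]. unfold Cmod, Cexp; simpl.
  replace ((exp a * cos b) * ((exp a * cos b) * 1) + (exp a * sin b) * ((exp a * sin b) * 1))%R
    with (exp a ^ 2 * (sin b ^ 2 + cos b ^ 2))%R by ring.
  rewrite <- !Rsqr_pow2, sin2_cos2, Rmult_1_r, Rsqr_pow2.
  apply sqrt_pow2, Rlt_le, exp_pos.
Qed.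

Lemma Cexp_neq_0 (u : C) : Cexp u <> 0.
Proof.
  intros E. pose proof (Cmod_Cexp u) as H. rewrite E, Cmod_0 in H.
  pose proof (exp_pos (fst u)). lra.
Qed.

Lemma Cexp_sub_1_sub_bound (h : C) :
  (Cmod h <= /2 -> Cmod (Cexp h - 1 - h) <= 3 * Cmod h ^ 2)%R.
Proof.
  intros Hh. pose proof (Rabs_fst_le_Cmod h). pose proof (Rabs_snd_le_Cmod h).
  assert (Hsq : (Cmod h ^ 2 = fst h ^ 2 + snd h ^ 2)%R)
    by (unfold Cmod; rewrite pow2_sqrt; [ring | nra]).
  destruct h as [x y]; cbn [fst snd] in *. rewrite Hsq.
  eapply Rle_trans; [apply Cmod_le_Rabs_plus |].
  replace (fst (Cexp (x, y) - 1 - (x, y))) with (exp x * cos y - 1 - x)%R by (simpl; ring).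
  replace (snd (Cexp (x, y) - 1 - (x, y))) with (exp x * sin y - y)%R by (simpl; ring).
  pose proof (exp_cos_taylor_bound x y ltac:(lra) ltac:(lra)).
  pose proof (exp_sin_taylor_bound x y ltac:(lra) ltac:(lra)). lra.
Qed.

Lemma Cexp_2pii_mul (u : C) :
  Cexp (2 * pii * u) =
  ((exp (- (2 * PI * snd u)) * cos (2 * PI * fst u))%R,
   (exp (- (2 * PI * snd u)) * sin (2 * PI * fst u))%R).
Proof.
  destruct u as [x y]. unfold Cexp, pii. simpl. f_equal; f_equal; f_equal; ring.
Qed.

Lemma Cmod_Cexp_2pii_mul (u : C) : Cmod (Cexp (2 * pii * u)) = exp (- (2 * PI * snd u)).
Proof. rewrite Cmod_Cexp. unfold pii. simpl. f_equal. ring. Qed.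

Lemma Cexp_2pii_mul_int (u : C) (k : Z) :
  fst u = IZR k -> Cexp (2 * pii * u) = RtoC (exp (- (2 * PI * snd u))).
Proof.
  intros Hk. rewrite Cexp_2pii_mul, Hk, sin_2PI_IZR, cos_2PI_IZR.
  apply injective_projections; simpl; ring.
Qed.

Lemma Cexp_2pii_mul_half_int (u : C) (k : Z) :
  fst u = (IZR k + /2)%R -> Cexp (2 * pii * u) = - RtoC (exp (- (2 * PI * snd u))).
Proof.
  intros Hk. rewrite Cexp_2pii_mul, Hk.
  replace (2 * PI * (IZR k + /2))%R with (2 * PI * IZR k + PI)%R by field.
  rewrite neg_sin, neg_cos, sin_2PI_IZR, cos_2PI_IZR.
  apply injective_projections; simpl; ring.
Qed.

Lemma Cexp_2pii_IZR (k : Z) : Cexp (2 * pii * RtoC (IZR k)) = 1.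
Proof.
  rewrite (Cexp_2pii_mul_int _ k) by reflexivity. simpl. rewrite Rmult_0_r, Ropp_0, exp_0.
  reflexivity.
Qed.

Lemma Cexp_2pii_IZR_half (k : Z) : Cexp (2 * pii * RtoC (IZR k + /2)) = - 1.
Proof.
  rewrite (Cexp_2pii_mul_half_int _ k) by reflexivity. simpl. rewrite Rmult_0_r, Ropp_0, exp_0.
  apply injective_projections; simpl; ring.
Qed.

Lemma Cexp_eq_1 (u : C) : Cexp u = 1 -> exists k : Z, u = 2 * pii * RtoC (IZR k).
Proof.
  destruct u as [x y]. intros H. unfold Cexp in H; cbn [fst snd] in H.
  assert (Hc : (exp x * cos y = 1)%R) by (apply (f_equal fst) in H; exact H).
  assert (Hs : (exp x * sin y = 0)%R) by (apply (f_equal snd) in H; exact H).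
  pose proof (exp_pos x).
  assert (Hs0 : sin y = 0%R) by (destruct (Rmult_integral _ _ Hs); [lra | assumption]).
  destruct (sin_eq_0_0 y Hs0) as [n Hn].
  destruct (Z.Even_or_Odd n) as [[k Hk] | [k Hk]]; subst n.
  - exists k. replace y with (2 * PI * IZR k)%R in * by (rewrite Hn, mult_IZR; ring).
    rewrite cos_2PI_IZR, Rmult_1_r, <- exp_0 in Hc. apply exp_inv in Hc.
    rewrite Hc. unfold pii. apply injective_projections; simpl; ring.
  - exfalso. replace y with (2 * PI * IZR k + PI)%R in * by (rewrite Hn, plus_IZR, mult_IZR; ring).
    rewrite neg_cos, cos_2PI_IZR in Hc. lra.
Qed.

Lemma Cexp_opp (u : C) : Cexp (- u) = / Cexp u.
Proof.
  pose proof (Cexp_neq_0 u).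
  replace (Cexp (- u)) with (/ Cexp u * (Cexp u * Cexp (- u))) by (field; assumption).
  rewrite <- Cexp_plus, Cplus_opp_r, Cexp_0. ring.
Qed.

(* Coquelicot has two non-convertible normed-module structures on [C] over
   [C_AbsRing]: [C_NormedModule], in which [local_deriv] is expressed, and
   [AbsRing_NormedModule C_AbsRing], for which the product rule and the derivative
   of the identity are stated. *)
Lemma is_derive_C_NormedModule (f : C -> C) (z l : C) :
  @is_derive C_AbsRing C_NormedModule f z l <->
  @is_derive C_AbsRing (AbsRing_NormedModule C_AbsRing) f z l.
Proof. split; intros [[H1 H2 H3] H4]; repeat split; assumption. Qed.

Lemma is_derive_Cext (f g : C -> C) (z l l' : C) :
  (forall x, f x = g x) -> l = l' -> is_derive f z l -> is_derive g z l'.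
Proof. intros Hfg <-. exact (is_derive_ext f g z l Hfg). Qed.

Lemma is_derive_Cext_loc (f g : C -> C) (z l : C) (d : R) : (0 < d)%R ->
  (forall x, (Cmod (x - z) < d)%R -> f x = g x) -> is_derive f z l -> is_derive g z l.
Proof.
  intros Hd Hfg. apply is_derive_ext_loc. exists (mkposreal d Hd). intros y Hy. apply Hfg, Hy.
Qed.

Lemma is_derive_Cconst (a z : C) : is_derive (fun _ => a) z (RtoC 0).
Proof. exact (is_derive_const a z). Qed.

Lemma is_derive_Cid (z : C) : is_derive (fun w : C => w) z (RtoC 1).
Proof. apply (proj2 (is_derive_C_NormedModule _ _ _)). exact (@is_derive_id C_AbsRing z). Qed.

Lemma is_derive_Cplus (f g : C -> C) (z df dg : C) :
  is_derive f z df -> is_derive g z dg -> is_derive (fun x => f x + g x) z (df + dg).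
Proof. exact (is_derive_plus f g z df dg). Qed.

Lemma is_derive_Cmult (f g : C -> C) (z df dg : C) :
  is_derive f z df -> is_derive g z dg ->
  is_derive (fun x => f x * g x) z (df * g z + f z * dg).
Proof.
  rewrite !is_derive_C_NormedModule. intros Hf Hg.
  exact (is_derive_mult f g z df dg Hf Hg Cmult_comm).
Qed.

Lemma is_derive_Ccomp (f g : C -> C) (z df dg : C) :
  is_derive f (g z) df -> is_derive g z dg -> is_derive (fun x => f (g x)) z (dg * df).
Proof.
  intros Hf Hg. apply is_derive_C_NormedModule in Hg. exact (is_derive_comp f g z df dg Hf Hg).
Qed.

Lemma is_derive_affine (a b z : C) : is_derive (fun w => a * w + b) z a.
Proof.
  eapply is_derive_Cext; [intros w; reflexivity | |].
  2: exact (is_derive_Cplus _ _ z _ _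
              (is_derive_Cmult _ _ z _ _ (is_derive_Cconst a z) (is_derive_Cid z))
              (is_derive_Cconst b z)).
  cbv beta. ring.
Qed.

Lemma is_derive_of_quadratic_remainder (f : C -> C) (z l : C) (d K : R) :
  (0 < d)%R ->
  (forall h, (Cmod h < d)%R -> (Cmod (f (z + h) - f z - h * l)%C <= K * Cmod h ^ 2)%R) ->
  is_derive f z l.
Proof.
  intros Hd HK. split; [apply is_linear_scal_l|].
  intros x Hx.
  apply (@is_filter_lim_locally_unique C_AbsRing (AbsRing_NormedModule C_AbsRing)) in Hx.
  subst x. intros eps. pose proof (cond_pos eps). pose proof (Rabs_pos K).
  set (delta := Rmin d (eps / (Rabs K + 1))).
  assert (Hdelta : (0 < delta)%R)
    by (apply Rmin_glb_lt; [lra | apply Rdiv_lt_0_compat; lra]).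
  exists (mkposreal _ Hdelta). intros y' Hy. set (y := y' : C).
  change (Cmod (y - z)%C < delta)%R in Hy.
  change (Cmod (f y - f z - (y - z) * l)%C <= eps * Cmod (y - z)%C)%R.
  specialize (HK (y - z) (Rlt_le_trans _ _ _ Hy (Rmin_l _ _))).
  replace (z + (y - z)) with y in HK by ring.
  eapply Rle_trans; [exact HK|].
  pose proof (Cmod_ge_0 (y - z)). set (c := Cmod (y - z)) in *.
  assert (Hc : (c * (Rabs K + 1) <= eps)%R).
  { apply (Rle_trans _ (eps / (Rabs K + 1) * (Rabs K + 1))); [|right; field; lra].
    apply Rmult_le_compat_r; [lra|]. apply Rlt_le, (Rlt_le_trans _ _ _ Hy), Rmin_r. }
  pose proof (Rle_abs K). nra.
Qed.

Lemma is_derive_Cexp (z : C) : is_derive Cexp z (Cexp z).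
Proof.
  apply (is_derive_of_quadratic_remainder _ _ _ (/2) (3 * Cmod (Cexp z))); [lra|].
  intros h Hh. rewrite Cexp_plus.
  replace (Cexp z * Cexp h - Cexp z - h * Cexp z) with (Cexp z * (Cexp h - 1 - h)) by ring.
  rewrite Cmod_mult. replace (3 * Cmod (Cexp z) * Cmod h ^ 2)%R
    with (Cmod (Cexp z) * (3 * Cmod h ^ 2))%R by ring.
  apply Rmult_le_compat_l; [apply Cmod_ge_0 | apply Cexp_sub_1_sub_bound; lra].
Qed.

Lemma is_derive_Cinv (z : C) : z <> 0 -> is_derive Cinv z (- / (z * z)).
Proof.
  intros Hz. pose proof (proj1 (Cmod_gt_0 z) Hz) as Hm.
  apply (is_derive_of_quadratic_remainder _ _ _ (Cmod z / 2) (2 / Cmod z ^ 3)); [lra|].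
  intros h Hh.
  assert (Hzh : (Cmod z / 2 <= Cmod (z + h))%R).
  { pose proof (Cmod_sub_le z (z + h)) as Htri. replace (z - (z + h)) with (- h) in Htri by ring.
    rewrite Cmod_opp in Htri. lra. }
  assert (Hzh0 : z + h <> 0) by (intros E; rewrite E, Cmod_0 in Hzh; lra).
  replace (/ (z + h) - / z - h * - / (z * z)) with (h * h * / (z * z * (z + h)))
    by (field; auto).
  rewrite !Cmod_mult, !Cmod_inv, !Cmod_mult by auto using Cmult_neq_0.
  pose proof (Cmod_ge_0 h).
  set (a := Cmod z) in *. set (b := Cmod (z + h)) in *. set (c := Cmod h) in *.
  replace (2 / a ^ 3 * c ^ 2)%R with (c * c * / (a * a * (a / 2)))%R by (field; lra).
  apply Rmult_le_compat_l; [nra|]. apply Rinv_le_contravar.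
  - apply Rmult_lt_0_compat; [nra | lra].
  - apply Rmult_le_compat_l; [nra | lra].
Qed.

Lemma is_derive_mobius (a b c d z : C) : c * z + d <> 0 ->
  is_derive (fun w => (a * w + b) / (c * w + d)) z ((a * d - b * c) / ((c * z + d) * (c * z + d))).
Proof.
  intros Hz.
  eapply is_derive_Cext; [intros w; reflexivity | |].
  2: exact (is_derive_Cmult _ _ z _ _ (is_derive_affine a b z)
              (is_derive_Ccomp Cinv _ z _ _ (is_derive_Cinv _ Hz) (is_derive_affine c d z))).
  cbv beta. field. exact Hz.
Qed.

(** * The Möbius map [M_lambda] and its inverse *)

Lemma two_pii_neq_0 : 2 * pii <> 0.
Proof.
  intros E. apply (f_equal snd) in E. simpl in E. pose proof PI_RGT_0. lra.
Qed.

Lemma pii_neq_0 : pii <> 0.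
Proof. intros E. apply two_pii_neq_0. rewrite E. ring. Qed.

Lemma Cmod_two_pii : Cmod (2 * pii) = (2 * PI)%R.
Proof.
  rewrite <- (sqrt_pow2 (2 * PI)) by (pose proof PI_RGT_0; lra).
  unfold Cmod, pii. f_equal. simpl. ring.
Qed.

Section Mobius.
Variable lam : C.
Hypothesis hp : lam <> pii.
Hypothesis hm : lam <> - pii.

Lemma lam_plus_pii_neq_0 : lam + pii <> 0.
Proof. intros E. apply hm. replace lam with (lam + pii - pii) by ring. rewrite E. ring. Qed.

Lemma lam_minus_pii_neq_0 : lam - pii <> 0.
Proof. intros E. apply hp. replace lam with (lam - pii + pii) by ring. rewrite E. ring. Qed.

Hint Resolve two_pii_neq_0 pii_neq_0 lam_plus_pii_neq_0 lam_minus_pii_neq_0 : core.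

Definition Dlam (w : C) : C := (lam + pii) * w - (lam - pii).

Definition Mlam_inv (m : C) : C := (1 + (lam - pii) * m) / (1 + (lam + pii) * m).

Lemma Dlam_eq (w : C) : Dlam w = (lam + pii) * (w - Blam lam).
Proof. unfold Dlam, Blam. field. auto. Qed.

Lemma Dlam_neq_0 (w : C) : w <> Blam lam -> Dlam w <> 0.
Proof.
  intros Hw. rewrite Dlam_eq. apply Cmult_neq_0; [auto | now apply Cminus_eq_contra].
Qed.

Lemma Blam_neq_0 : Blam lam <> 0.
Proof.
  intros E. apply lam_minus_pii_neq_0.
  replace (lam - pii) with (Blam lam * (lam + pii)) by (unfold Blam; field; auto).
  rewrite E. ring.
Qed.

Lemma Blam_neq_1 : Blam lam <> 1.
Proof.
  intros E. apply two_pii_neq_0.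
  replace (2 * pii) with ((lam + pii) * (1 - Blam lam)) by (unfold Blam; field; auto).
  rewrite E. ring.
Qed.

Lemma Clam_neq_Blam : Clam lam <> Blam lam.
Proof.
  unfold Clam. intros E.
  destruct (Cmult_integral (Blam lam) (Blam lam - 1)) as [H | H].
  - replace (Blam lam * (Blam lam - 1)) with (Blam lam * Blam lam - Blam lam) by ring.
    rewrite E. ring.
  - exact (Blam_neq_0 H).
  - exact (Blam_neq_1 (proj2 (Ceq_minus _ _) H)).
Qed.

Lemma is_derive_Mlam (w : C) : w <> Blam lam ->
  is_derive (Mlam lam) w (- (2 * pii) / (Dlam w * Dlam w)).
Proof.
  intros Hw. pose proof (Dlam_neq_0 w Hw) as HD.
  eapply is_derive_Cext; [| | exact (is_derive_mobius (- 1) 1 (lam + pii) (- (lam - pii)) w HD)].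
  - intros x. unfold Mlam. f_equal. ring.
  - unfold Dlam in *. field. exact HD.
Qed.

Lemma Dlam_Mlam_inv (m : C) : 1 + (lam + pii) * m <> 0 ->
  Dlam (Mlam_inv m) = 2 * pii / (1 + (lam + pii) * m).
Proof. intros Hm. unfold Dlam, Mlam_inv. field. exact Hm. Qed.

Lemma Mlam_Mlam_inv (m : C) : 1 + (lam + pii) * m <> 0 -> Mlam lam (Mlam_inv m) = m.
Proof.
  intros Hm. unfold Mlam.
  change ((lam + pii) * Mlam_inv m - (lam - pii)) with (Dlam (Mlam_inv m)).
  rewrite Dlam_Mlam_inv by exact Hm. unfold Mlam_inv. field. auto.
Qed.

Lemma Mlam_inv_sub_Blam (m : C) : 1 + (lam + pii) * m <> 0 ->
  Mlam_inv m - Blam lam = 2 * pii / ((lam + pii) * (1 + (lam + pii) * m)).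
Proof. intros Hm. unfold Mlam_inv, Blam. field. auto. Qed.

Lemma Mlam_inv_neq_Blam (m : C) : 1 + (lam + pii) * m <> 0 -> Mlam_inv m <> Blam lam.
Proof.
  intros Hm E. apply Ceq_minus in E. rewrite Mlam_inv_sub_Blam in E by exact Hm.
  revert E. apply Cmult_neq_0; [auto | apply Cinv_neq_0, Cmult_neq_0; auto].
Qed.

Lemma Mlam_inv_den_Mlam (w : C) : w <> Blam lam -> 1 + (lam + pii) * Mlam lam w = 2 * pii / Dlam w.
Proof. intros Hw. pose proof (Dlam_neq_0 w Hw). unfold Mlam, Dlam in *. field. auto. Qed.

Lemma Mlam_inv_den_Mlam_neq_0 (w : C) : w <> Blam lam -> 1 + (lam + pii) * Mlam lam w <> 0.
Proof.
  intros Hw. rewrite Mlam_inv_den_Mlam by exact Hw.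
  apply Cmult_neq_0; [auto | now apply Cinv_neq_0, Dlam_neq_0].
Qed.

Lemma Mlam_invK (w : C) : w <> Blam lam -> Mlam_inv (Mlam lam w) = w.
Proof.
  intros Hw. pose proof (Dlam_neq_0 w Hw). unfold Mlam_inv. rewrite Mlam_inv_den_Mlam by exact Hw.
  unfold Mlam, Dlam in *. field. auto.
Qed.

Lemma glam_Mlam_inv (m : C) : 1 + (lam + pii) * m <> 0 ->
  glam lam (Mlam_inv m) = Mlam_inv m * Cexp (2 * pii * m).
Proof. intros Hm. unfold glam. rewrite Mlam_Mlam_inv by exact Hm. reflexivity. Qed.

(** * Fixed points and critical points *)

Lemma glam_fixed_iff (w : C) : w <> Blam lam ->
  glam lam w = w <->
  w = 0 \/ exists s : Z, wstar_den lam s <> 0 /\ w = wstar_num lam s / wstar_den lam s.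
Proof.
  intros Hw. split.
  - intros Hfix. destruct (Ceq_dec w 0) as [H0 | H0]; [now left | right].
    assert (HE : Cexp (2 * pii * Mlam lam w) = 1).
    { replace (Cexp _) with (/ w * glam lam w) by (unfold glam; field; exact H0).
      rewrite Hfix. field. exact H0. }
    destruct (Cexp_eq_1 _ HE) as [s Hs].
    assert (HM : Mlam lam w = RtoC (IZR s)).
    { replace (Mlam lam w) with (/ (2 * pii) * (2 * pii * Mlam lam w)) by (field; auto).
      rewrite Hs. field. auto. }
    exists s. split.
    + unfold wstar_den. rewrite <- HM. exact (Mlam_inv_den_Mlam_neq_0 w Hw).
    + rewrite <- (Mlam_invK w Hw), HM. reflexivity.
  - intros [-> | [s [Hs ->]]].
    + unfold glam. ring.
    + change (glam lam (Mlam_inv (IZR s)) = Mlam_inv (IZR s)).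
      rewrite glam_Mlam_inv by exact Hs. rewrite Cexp_2pii_IZR. ring.
Qed.

Lemma glam_1 : glam lam 1 = 1.
Proof.
  unfold glam, Mlam. replace (- (1 - 1) / ((lam + pii) * 1 - (lam - pii))) with (RtoC 0)
    by (unfold Cdiv; ring).
  rewrite Cmult_0_r, Cexp_0. ring.
Qed.

Definition glam_deriv (w : C) : C :=
  Cexp (2 * pii * Mlam lam w) * (1 - w * (2 * pii / Dlam w) * (2 * pii / Dlam w)).

Lemma is_derive_glam (w : C) : w <> Blam lam -> is_derive (glam lam) w (glam_deriv w).
Proof.
  intros Hw. pose proof (Dlam_neq_0 w Hw) as HD.
  pose proof (is_derive_Cmult (fun _ => 2 * pii) (Mlam lam) w _ _
                (is_derive_Cconst _ w) (is_derive_Mlam w Hw)) as Harg.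
  pose proof (is_derive_Ccomp Cexp _ w _ _ (is_derive_Cexp _) Harg) as Hexp.
  eapply is_derive_Cext; [intros x; reflexivity | |
                          exact (is_derive_Cmult _ _ w _ _ (is_derive_Cid w) Hexp)].
  unfold glam_deriv. cbv beta. field. exact HD.
Qed.

Lemma glam_deriv_0 : glam_deriv 0 = Cexp (2 * pii / (pii - lam)).
Proof.
  assert (pii - lam <> 0) by (intros E; apply hp; apply Ceq_minus in E; auto).
  unfold glam_deriv, Mlam, Dlam. rewrite <- (Cmult_1_r (Cexp (2 * pii / (pii - lam)))).
  f_equal; [f_equal; field; split; auto | ring].
Qed.

Lemma glam_deriv_Mlam_inv (m : C) : 1 + (lam + pii) * m <> 0 ->
  glam_deriv (Mlam_inv m) =
  Cexp (2 * pii * m) * (1 - (1 + (lam - pii) * m) * (1 + (lam + pii) * m)).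
Proof.
  intros Hm. unfold glam_deriv. rewrite Mlam_Mlam_inv, Dlam_Mlam_inv by exact Hm.
  unfold Mlam_inv. f_equal. field. auto.
Qed.

Lemma glam_deriv_factor (w : C) : w <> Blam lam ->
  glam_deriv w =
  Cexp (2 * pii * Mlam lam w) *
  (((lam + pii) * (lam + pii) * w - (lam - pii) * (lam - pii)) * (w - 1) / (Dlam w * Dlam w)).
Proof.
  intros Hw. pose proof (Dlam_neq_0 w Hw). unfold glam_deriv, Dlam in *. f_equal. field. auto.
Qed.

Lemma glam_deriv_eq_0_iff (w : C) : w <> Blam lam -> glam_deriv w = 0 <-> w = 1 \/ w = Clam lam.
Proof.
  intros Hw. rewrite glam_deriv_factor by exact Hw. pose proof (Dlam_neq_0 w Hw) as HD.
  assert (Hquad : (lam + pii) * (lam + pii) * w - (lam - pii) * (lam - pii) = 0 <-> w = Clam lam).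
  { unfold Clam, Blam. split.
    - intros E. apply Ceq_minus in E.
      replace w with ((lam + pii) * (lam + pii) * w / ((lam + pii) * (lam + pii)))
        by (field; auto).
      rewrite E. field. auto.
    - intros ->. field. auto. }
  split.
  - intros E. destruct (Cmult_integral _ _ E) as [E1 | E1]; [now apply Cexp_neq_0 in E1 |].
    destruct (Cmult_integral _ _ E1) as [E2 | E2].
    + destruct (Cmult_integral _ _ E2) as [E3 | E3].
      * right. now apply Hquad.
      * left. now apply Ceq_minus.
    + exfalso. revert E2. now apply Cinv_neq_0, Cmult_neq_0.
  - intros [-> | ->].
    + unfold Cdiv. ring.
    + rewrite (proj2 Hquad eq_refl). unfold Cdiv. ring.
Qed.

End Mobius.

(** * The fixed point at infinity *)

Section Infinity.
Variable lam : C.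
Hypothesis hm : lam <> - pii.

(* In the coordinate [u = 1/w], [g_lambda] reads [u |-> 1 / g_lambda(1/u)], and
   [M_lambda(1/u) = - (1 - u) / ((lam + pi i) - (lam - pi i) u)]. *)
Definition ginf (u : C) : C :=
  u * Cexp (2 * pii * ((1 - u) / ((lam + pii) - (lam - pii) * u))).

Definition ginf_radius : R := (Cmod (lam + pii) / (Cmod (lam - pii) + 1))%R.

Lemma ginf_radius_pos : (0 < ginf_radius)%R.
Proof.
  apply Rdiv_lt_0_compat; [apply Cmod_gt_0, lam_plus_pii_neq_0, hm |].
  pose proof (Cmod_ge_0 (lam - pii)). lra.
Qed.

Lemma ginf_den_neq_0 (u : C) : (Cmod u < ginf_radius)%R -> (lam + pii) - (lam - pii) * u <> 0.
Proof.
  intros Hu E. apply Ceq_minus in E. apply (f_equal Cmod) in E. rewrite Cmod_mult in E.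
  unfold ginf_radius in Hu. pose proof (Cmod_ge_0 (lam - pii)). pose proof (Cmod_ge_0 u).
  apply (Rmult_lt_compat_r (Cmod (lam - pii) + 1)) in Hu; [|lra].
  unfold Rdiv in Hu. rewrite Rmult_assoc, Rinv_l, Rmult_1_r in Hu by lra. nra.
Qed.

Lemma local_expr_Inf (u : C) : (Cmod u < ginf_radius)%R -> local_expr (gS lam) Inf u = ginf u.
Proof.
  intros Hu. pose proof (ginf_den_neq_0 u Hu) as Hden.
  assert (Hnz : u <> 0 -> / glam lam (/ u) = ginf u).
  { intros Hu0. unfold glam, ginf.
    replace (2 * pii * Mlam lam (/ u))
      with (- (2 * pii * ((1 - u) / ((lam + pii) - (lam - pii) * u))))
      by (unfold Mlam; field; auto).
    rewrite Cexp_opp. field. split; [apply Cexp_neq_0 | exact Hu0]. }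
  unfold local_expr, chart_at, gS, coord_at.
  destruct u as [u1 u2]; cbn [fst snd].
  destruct (Req_EM_T u1 0) as [-> | E1]; [destruct (Req_EM_T u2 0) as [-> | E2] |].
  - unfold ginf. symmetry. apply Cmult_0_l.
  - apply Hnz. intros E. apply (f_equal snd) in E. auto.
  - apply Hnz. intros E. apply (f_equal fst) in E. auto.
Qed.

Lemma local_deriv_Inf : local_deriv (gS lam) Inf (Cexp (2 * pii / (pii + lam))).
Proof.
  assert (Hden : - (lam - pii) * 0 + (lam + pii) <> 0)
    by (rewrite Cmult_0_r, Cplus_0_l; exact (lam_plus_pii_neq_0 lam hm)).
  pose proof (is_derive_Ccomp Cexp _ 0 _ _ (is_derive_Cexp _)
    (is_derive_Cmult (fun _ => 2 * pii) _ 0 _ _ (is_derive_Cconst _ 0)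
       (is_derive_mobius (- 1) 1 (- (lam - pii)) (lam + pii) 0 Hden))) as Hexp.
  unfold local_deriv. change (coord_at Inf Inf) with (RtoC 0).
  apply (is_derive_Cext_loc ginf _ _ _ _ ginf_radius_pos).
  { intros x Hx. symmetry. apply local_expr_Inf. replace x with (x - 0) by ring. exact Hx. }
  eapply is_derive_Cext; [intros x | | exact (is_derive_Cmult _ _ 0 _ _ (is_derive_Cid 0) Hexp)].
  - unfold ginf. cbv beta.
    replace (1 - x) with (-1 * x + 1) by ring.
    replace (lam + pii - (lam - pii) * x) with (- (lam - pii) * x + (lam + pii)) by ring.
    reflexivity.
  - cbv beta. rewrite Cmult_0_l, Cmult_1_l, Cplus_0_r. f_equal.
    rewrite Cmult_0_r, Cplus_0_l, (Cplus_comm pii). field. exact (lam_plus_pii_neq_0 lam hm).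
Qed.

End Infinity.

(** * The essential singularity *)

Section Essential_singularity.
Variable lam : C.
Hypothesis hp : lam <> pii.
Hypothesis hm : lam <> - pii.

Lemma Mlam_inv_tends_to_Blam (d : R) : (0 < d)%R -> exists m0 : R, forall m : R, (m0 <= m)%R ->
  1 + (lam + pii) * RtoC m <> 0 /\ (Cmod (Mlam_inv lam (RtoC m) - Blam lam) < d)%R.
Proof.
  intros Hd. set (A := Cmod (lam + pii)).
  assert (HA : (0 < A)%R) by apply Cmod_gt_0, lam_plus_pii_neq_0, hm.
  pose proof PI_RGT_0 as HPI.
  assert (HPd : (0 < 2 * PI / (A * d))%R) by (apply Rdiv_lt_0_compat; nra).
  exists ((1 + 2 * PI / (A * d)) / A + 1)%R. intros m Hm.
  assert (HmA : (2 * PI / (A * d) < m * A - 1)%R).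
  { apply (Rmult_le_compat_r A) in Hm; [|lra].
    replace (((1 + 2 * PI / (A * d)) / A + 1) * A)%R with (1 + 2 * PI / (A * d) + A)%R
      in Hm by (field; lra).
    lra. }
  assert (Hm0 : (0 < m)%R).
  { assert (0 < (1 + 2 * PI / (A * d)) / A)%R by (apply Rdiv_lt_0_compat; lra). lra. }
  set (X := Cmod (1 + (lam + pii) * RtoC m)).
  assert (HX : (m * A - 1 <= X)%R).
  { pose proof (Cmod_sub_le ((lam + pii) * RtoC m) (1 + (lam + pii) * RtoC m)) as H.
    replace ((lam + pii) * RtoC m - (1 + (lam + pii) * RtoC m)) with (- (1)) in H by ring.
    rewrite Cmod_opp, Cmod_1, Cmod_mult, Cmod_RtoC_pos in H by lra. fold A X in H. lra. }
  assert (Hden : 1 + (lam + pii) * RtoC m <> 0)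
    by (intros E; unfold X in HX; rewrite E, Cmod_0 in HX; lra).
  split; [exact Hden |].
  rewrite Mlam_inv_sub_Blam, Cmod_div, Cmod_two_pii, Cmod_mult
    by (try apply Cmult_neq_0; auto using lam_plus_pii_neq_0).
  fold A X. assert (HXd : (2 * PI < A * d * X)%R).
  { replace (2 * PI)%R with (A * d * (2 * PI / (A * d)))%R by (field; lra).
    apply Rmult_lt_compat_l; nra. }
  apply (Rmult_lt_reg_r (A * X)); [nra |].
  unfold Rdiv. rewrite Rmult_assoc, Rinv_l, Rmult_1_r by nra. lra.
Qed.

(* The points [M_lambda^{-1}(k)] and [M_lambda^{-1}(k + 1/2)], [k] a large integer. *)
Lemma fixed_and_antifixed_points_near_Blam (d : R) : (0 < d)%R ->
  exists w1 w2 : C,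
    w1 <> Blam lam /\ w2 <> Blam lam /\
    (Cmod (w1 - Blam lam) < d)%R /\ (Cmod (w2 - Blam lam) < d)%R /\
    glam lam w1 = w1 /\ glam lam w2 = - w2.
Proof.
  intros Hd. destruct (Mlam_inv_tends_to_Blam d Hd) as [m0 Hm0].
  destruct (archimed m0) as [Hk _]. set (k := up m0) in Hk.
  destruct (Hm0 (IZR k) ltac:(lra)) as [Hden1 Hd1].
  destruct (Hm0 (IZR k + /2)%R ltac:(lra)) as [Hden2 Hd2].
  exists (Mlam_inv lam (IZR k)), (Mlam_inv lam (RtoC (IZR k + /2))).
  repeat split; try assumption; try now apply Mlam_inv_neq_Blam.
  - rewrite glam_Mlam_inv, Cexp_2pii_IZR by auto. ring.
  - rewrite glam_Mlam_inv, Cexp_2pii_IZR_half by auto. ring.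
Qed.

Lemma essential_singularity : essential_singularity_at lam (Blam lam).
Proof.
  intros [a Ha]. pose proof (proj1 (Cmod_gt_0 _) (Blam_neq_0 lam hp hm)) as HB.
  destruct a as [z |].
  - destruct (Ha (Cmod (Blam lam) / 2)%R ltac:(lra)) as [delta [Hdelta Hclose]].
    destruct (fixed_and_antifixed_points_near_Blam (Rmin delta (Cmod (Blam lam) / 2)))
      as [w1 [w2 [Hw1 [Hw2 [Hd1 [Hd2 [Hg1 Hg2]]]]]]]; [now apply Rmin_glb_lt; lra |].
    pose proof (Rmin_l delta (Cmod (Blam lam) / 2)).
    pose proof (Rmin_r delta (Cmod (Blam lam) / 2)).
    pose proof (Hclose w1 Hw1 ltac:(lra)) as Hz1. pose proof (Hclose w2 Hw2 ltac:(lra)) as Hz2.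
    simpl in Hz1, Hz2. rewrite Hg1 in Hz1. rewrite Hg2 in Hz2.
    (* [2 B = (B - w1) + (B - w2) + ((w1 - z) - (- w2 - z))] *)
    pose proof (Cmod_triangle (- (w1 - Blam lam) + - (w2 - Blam lam)) ((w1 - z) + - (- w2 - z)))
      as Htri.
    pose proof (Cmod_triangle (- (w1 - Blam lam)) (- (w2 - Blam lam))) as Htri1.
    pose proof (Cmod_triangle (w1 - z) (- (- w2 - z))) as Htri2.
    replace (- (w1 - Blam lam) + - (w2 - Blam lam) + (w1 - z + - (- w2 - z))) with (2 * Blam lam)
      in Htri by ring.
    rewrite Cmod_mult, Cmod_RtoC_pos in Htri by lra.
    rewrite !Cmod_opp in Htri1. rewrite Cmod_opp in Htri2. lra.
  - destruct (Ha (/ (Cmod (Blam lam) + 1))%R ltac:(apply Rinv_0_lt_compat; lra))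
      as [delta [Hdelta Hclose]].
    destruct (fixed_and_antifixed_points_near_Blam (Rmin delta 1))
      as [w1 [_ [Hw1 [_ [Hd1 [_ [Hg1 _]]]]]]]; [now apply Rmin_glb_lt; lra |].
    pose proof (Rmin_l delta 1). pose proof (Rmin_r delta 1).
    pose proof (Hclose w1 Hw1 ltac:(lra)) as Hinf. simpl in Hinf.
    rewrite Hg1, Rinv_inv in Hinf. pose proof (Cmod_sub_le w1 (Blam lam)). lra.
Qed.

End Essential_singularity.

(** * The asymptotic values [0] and [infinity] *)

Lemma filterlim_p_infty_Cmod (g : R -> C) (B : C) :
  filterlim g (Rbar_locally p_infty) (locally B) <->
  forall d : R, (0 < d)%R -> exists T : R, forall t : R, (T < t)%R -> (Cmod (g t - B) < d)%R.
Proof.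
  rewrite (filterlim_locally_ball_norm (U := C_NormedModule)). split.
  - intros H d Hd. exact (H (mkposreal d Hd)).
  - intros H eps. exact (H eps (cond_pos eps)).
Qed.

Lemma continuous_C_real_affine (a c : C) (f : R -> R) (t : R) :
  continuous f t -> continuous (fun s => a + RtoC (f s) * c) t.
Proof.
  intros Hf.
  apply (continuous_plus (V := C_R_NormedModule) (fun _ => a)); [apply continuous_const |].
  eapply continuous_ext; [intros s; apply scal_R_Cmult |].
  exact (continuous_scal_l (V := C_R_NormedModule) f c t Hf).
Qed.

Lemma exp_opp_eventually_lt (c : R) :
  (0 < c)%R -> exists T : R, forall t : R, (T < t -> exp (- t) < c)%R.
Proof.
  intros Hc. exists (- ln c)%R. intros t Ht.
  rewrite <- (exp_ln c Hc). apply exp_increasing. lra.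
Qed.

Lemma lt_exp_2PI_exp (t : R) : (t < exp (2 * PI * exp t))%R.
Proof.
  pose proof (exp_ineq1_le (2 * PI * exp t)). pose proof (exp_ineq1_le t).
  pose proof PI2_1. pose proof (exp_pos t). nra.
Qed.

Lemma exp_2PI_exp_eventually_gt (M : R) :
  exists T : R, forall t : R, (T < t -> M < exp (2 * PI * exp t))%R.
Proof. exists M. intros t Ht. pose proof (lt_exp_2PI_exp t). lra. Qed.

Lemma exp_opp_2PI_exp_eventually_lt (eps : R) : (0 < eps)%R ->
  exists T : R, forall t : R, (T < t -> exp (- (2 * PI * exp t)) < eps)%R.
Proof.
  intros Heps. exists (/ eps)%R. intros t Ht. pose proof (lt_exp_2PI_exp t).
  pose proof (Rinv_0_lt_compat eps Heps). rewrite exp_Ropp, <- (Rinv_inv eps).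
  apply Rinv_lt_contravar; [apply Rmult_lt_0_compat |]; lra.
Qed.

Section Asymptotic_values.
Variable lam : C.
Hypothesis hp : lam <> pii.
Hypothesis hm : lam <> - pii.

Definition path_coef (s : R) : C := RtoC (2 * PI / s) / ((lam + pii) * (lam + pii)).

(* The preimage under [M_lambda] of [t |-> i s e^t - 1 / (lam + pi i)]. *)
Definition asymptotic_path (s t : R) : C := Blam lam + RtoC (exp (- t)) * path_coef s.

Lemma continuous_asymptotic_path (s t : R) : continuous (asymptotic_path s) t.
Proof.
  apply continuous_C_real_affine.
  apply (ex_derive_continuous (fun t => exp (- t))). auto_derive. exact I.
Qed.

Lemma Cmod_asymptotic_path_sub_Blam (s t : R) :
  Cmod (asymptotic_path s t - Blam lam) = (exp (- t) * Cmod (path_coef s))%R.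
Proof.
  unfold asymptotic_path. replace (Blam lam + _ - Blam lam) with (RtoC (exp (- t)) * path_coef s)
    by ring.
  rewrite Cmod_mult, Cmod_RtoC_pos; [reflexivity | apply Rlt_le, exp_pos].
Qed.

Lemma path_coef_neq_0 (s : R) : s <> 0%R -> path_coef s <> 0.
Proof.
  intros Hs. pose proof PI_RGT_0. apply Cmult_neq_0.
  - intros E. apply RtoC_inj in E. unfold Rdiv in E.
    apply Rmult_integral in E as [E | E]; [lra | exact (Rinv_neq_0_compat s Hs E)].
  - apply Cinv_neq_0, Cmult_neq_0; apply lam_plus_pii_neq_0, hm.
Qed.

Lemma asymptotic_path_neq_Blam (s t : R) : s <> 0%R -> asymptotic_path s t <> Blam lam.
Proof.
  intros Hs E. apply Ceq_minus, (f_equal Cmod) in E.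
  rewrite Cmod_asymptotic_path_sub_Blam, Cmod_0 in E.
  apply Rmult_integral in E as [E | E]; [exact (Rgt_not_eq _ _ (exp_pos _) E) |].
  exact (path_coef_neq_0 s Hs (Cmod_eq_0 _ E)).
Qed.

Lemma asymptotic_path_tends_to_Blam (s : R) :
  filterlim (asymptotic_path s) (Rbar_locally p_infty) (locally (Blam lam)).
Proof.
  apply filterlim_p_infty_Cmod. intros d Hd. pose proof (Cmod_ge_0 (path_coef s)).
  destruct (exp_opp_eventually_lt (d / (Cmod (path_coef s) + 1))) as [T HT];
    [apply Rdiv_lt_0_compat; lra |].
  exists T. intros t Ht. rewrite Cmod_asymptotic_path_sub_Blam. specialize (HT t Ht).
  apply (Rmult_lt_compat_r (Cmod (path_coef s) + 1)) in HT; [|lra].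
  replace (d / (Cmod (path_coef s) + 1) * (Cmod (path_coef s) + 1))%R with d in HT
    by (field; lra).
  pose proof (exp_pos (- t)). nra.
Qed.

Lemma Mlam_asymptotic_path (s t : R) : s <> 0%R ->
  Mlam lam (asymptotic_path s t) = pii * RtoC (s * exp t / PI) - / (lam + pii).
Proof.
  intros Hs. pose proof PI_RGT_0. pose proof (exp_pos t).
  unfold Mlam, asymptotic_path, path_coef, Blam.
  rewrite exp_Ropp, !RtoC_div, RtoC_inv, !RtoC_mult by lra.
  assert (RtoC PI <> 0) by (intros E; apply RtoC_inj in E; lra).
  assert (RtoC s <> 0) by (intros E; apply RtoC_inj in E; lra).
  assert (RtoC (exp t) <> 0) by (intros E; apply RtoC_inj in E; lra).
  field. repeat split; auto using lam_plus_pii_neq_0, pii_neq_0.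
  match goal with
  | |- ?e <> RtoC 0 => replace e with (RtoC (2 * PI)) by (rewrite RtoC_mult; ring)
  end.
  intros E. apply RtoC_inj in E. lra.
Qed.

Lemma Cmod_glam_asymptotic_path (s t : R) : s <> 0%R ->
  Cmod (glam lam (asymptotic_path s t)) =
  (Cmod (asymptotic_path s t) * exp (- (2 * PI * s * exp t)) *
   Cmod (Cexp (- (2 * pii / (lam + pii)))))%R.
Proof.
  intros Hs. pose proof PI_RGT_0. unfold glam. rewrite Mlam_asymptotic_path by exact Hs.
  replace (2 * pii * (pii * RtoC (s * exp t / PI) - / (lam + pii)))
    with (RtoC (- (2 * PI * s * exp t)) + - (2 * pii / (lam + pii))).
  - rewrite Cexp_plus, Cexp_RtoC, !Cmod_mult, Cmod_RtoC_pos by apply Rlt_le, exp_pos. ring.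
  - assert (E : 2 * pii * (pii * RtoC (s * exp t / PI)) = RtoC (- (2 * PI * s * exp t)))
      by (unfold pii; apply injective_projections; simpl; field; lra).
    rewrite <- E. unfold Cdiv. ring.
Qed.

Lemma Cmod_asymptotic_path_bounds (s : R) : exists T : R, forall t : R, (T < t)%R ->
  (Cmod (Blam lam) / 2 <= Cmod (asymptotic_path s t) <= 3 * Cmod (Blam lam) / 2)%R.
Proof.
  pose proof (proj1 (Cmod_gt_0 _) (Blam_neq_0 lam hp hm)) as HB.
  destruct (proj1 (filterlim_p_infty_Cmod _ _) (asymptotic_path_tends_to_Blam s)
              (Cmod (Blam lam) / 2)%R ltac:(lra)) as [T HT].
  exists T. intros t Ht. specialize (HT t Ht).
  pose proof (Cmod_sub_le (asymptotic_path s t) (Blam lam)).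
  pose proof (Cmod_sub_le (Blam lam) (asymptotic_path s t)) as Htri.
  replace (Blam lam - asymptotic_path s t) with (- (asymptotic_path s t - Blam lam)) in Htri
    by ring.
  rewrite Cmod_opp in Htri. split; lra.
Qed.

Lemma asymptotic_value_0 : asymptotic_value lam (Fin 0).
Proof.
  exists (asymptotic_path 1). split; [|split; [|split]].
  - apply continuous_asymptotic_path.
  - intros t. apply asymptotic_path_neq_Blam. lra.
  - apply asymptotic_path_tends_to_Blam.
  - intros eps Heps. simpl.
    set (K := Cmod (Cexp (- (2 * pii / (lam + pii))))).
    assert (HK : (0 <= K)%R) by apply Cmod_ge_0.
    pose proof (Cmod_ge_0 (Blam lam)).
    set (c := (3 * Cmod (Blam lam) / 2 * K + 1)%R).
    assert (Hc : (1 <= c)%R) by (unfold c; nra).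
    destruct (Cmod_asymptotic_path_bounds 1) as [T0 HT0].
    destruct (exp_opp_2PI_exp_eventually_lt (eps / c)) as [T1 HT1]; [apply Rdiv_lt_0_compat; lra |].
    exists (Rmax T0 T1). intros t Ht. pose proof (Rmax_l T0 T1). pose proof (Rmax_r T0 T1).
    destruct (HT0 t ltac:(lra)) as [_ Hpath]. specialize (HT1 t ltac:(lra)).
    replace (glam lam (asymptotic_path 1 t) - 0) with (glam lam (asymptotic_path 1 t)) by ring.
    rewrite Cmod_glam_asymptotic_path, Rmult_1_r by lra. fold K.
    pose proof (exp_pos (- (2 * PI * exp t))).
    apply (Rle_lt_trans _ (c * exp (- (2 * PI * exp t)))).
    + assert (Cmod (asymptotic_path 1 t) * K <= 3 * Cmod (Blam lam) / 2 * K)%R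
        by (apply Rmult_le_compat_r; lra).
      unfold c. nra.
    + apply (Rmult_lt_compat_l c) in HT1; [|lra].
      replace (c * (eps / c))%R with eps in HT1 by (field; lra). exact HT1.
Qed.

Lemma asymptotic_value_Inf : asymptotic_value lam Inf.
Proof.
  exists (asymptotic_path (-1)). split; [|split; [|split]].
  - apply continuous_asymptotic_path.
  - intros t. apply asymptotic_path_neq_Blam. lra.
  - apply asymptotic_path_tends_to_Blam.
  - intros eps Heps. simpl.
    set (K := Cmod (Cexp (- (2 * pii / (lam + pii))))).
    assert (HK : (0 < K)%R) by (unfold K; rewrite Cmod_Cexp; apply exp_pos).
    set (b := Cmod (Blam lam)).
    assert (Hb : (0 < b)%R) by (apply Cmod_gt_0, Blam_neq_0; assumption).
    destruct (Cmod_asymptotic_path_bounds (-1)) as [T0 HT0].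
    destruct (exp_2PI_exp_eventually_gt (2 / (eps * b * K))) as [T1 HT1].
    exists (Rmax T0 T1). intros t Ht. pose proof (Rmax_l T0 T1). pose proof (Rmax_r T0 T1).
    destruct (HT0 t ltac:(lra)) as [Hpath _]. specialize (HT1 t ltac:(lra)). fold b in Hpath.
    rewrite Cmod_glam_asymptotic_path by lra. fold K.
    replace (- (2 * PI * -1 * exp t))%R with (2 * PI * exp t)%R by ring.
    assert (Hpos : (0 < eps * b * K)%R) by (repeat apply Rmult_lt_0_compat; lra).
    apply (Rmult_lt_compat_r (eps * b * K)) in HT1; [|exact Hpos].
    replace (2 / (eps * b * K) * (eps * b * K))%R with 2%R in HT1 by (field; lra).
    apply (Rmult_lt_reg_l eps); [exact Heps |]. rewrite Rinv_r by lra.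
    pose proof (exp_pos (2 * PI * exp t)). nra.
Qed.

End Asymptotic_values.

(** * No other asymptotic values *)

Lemma IVT_int_and_half_int (f : R -> R) (t1 t2 : R) : continuity f ->
  (2 <= Rabs (f t2 - f t1))%R ->
  exists (k : Z) (ta tb : R),
    (Rmin t1 t2 <= ta <= Rmax t1 t2)%R /\ (Rmin t1 t2 <= tb <= Rmax t1 t2)%R /\
    f ta = IZR k /\ f tb = (IZR k + /2)%R.
Proof.
  intros Hf Hgap.
  assert (Hrange : (Rmin (f t1) (f t2) + 2 <= Rmax (f t1) (f t2))%R).
  { destruct (Rle_dec (f t1) (f t2)).
    - rewrite Rmin_left, Rmax_right, Rabs_right in * by lra. lra.
    - rewrite Rmin_right, Rmax_left, Rabs_left in * by lra. lra. }
  destruct (archimed (Rmin (f t1) (f t2))) as [Hk1 Hk2].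
  set (k := up (Rmin (f t1) (f t2))) in *.
  destruct (IVT_gen f t1 t2 (IZR k) Hf) as [ta [Hta Hfa]]; [lra |].
  destruct (IVT_gen f t1 t2 (IZR k + /2) Hf) as [tb [Htb Hfb]]; [lra |].
  exists k, ta, tb. auto.
Qed.

Lemma Rabs_snd_le_of_Cmod_Cexp_bounds (u : C) (a b : R) : (0 < a)%R ->
  (a < Cmod (Cexp (2 * pii * u)) < b)%R ->
  (Rabs (snd u) <= (Rabs (ln a) + Rabs (ln b)) / (2 * PI))%R.
Proof.
  rewrite Cmod_Cexp_2pii_mul. intros Ha [Hlo Hhi]. pose proof PI_RGT_0.
  set (x := (- (2 * PI * snd u))%R) in *.
  assert (Hx : (ln a < x < ln b)%R).
  { rewrite <- (ln_exp x). split; apply ln_increasing; lra || apply exp_pos. }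
  replace (snd u) with (- x / (2 * PI))%R by (unfold x; field; lra).
  unfold Rdiv. rewrite Rabs_mult, Rabs_Ropp, (Rabs_right (/ (2 * PI)))
    by (apply Rle_ge, Rlt_le, Rinv_0_lt_compat; lra).
  apply Rmult_le_compat_r; [apply Rlt_le, Rinv_0_lt_compat; lra |].
  pose proof (Rle_abs (ln b)). pose proof (Rle_abs (- ln a)) as Hla. rewrite Rabs_Ropp in Hla.
  pose proof (Rabs_pos (ln a)). pose proof (Rabs_pos (ln b)).
  apply Rabs_le. lra.
Qed.

(* From [r w1 ~ c] and [- r' w2 ~ c] with [w1, w2 ~ B] one gets [(r + r') B ~ 0]. *)
Lemma Cmod_lt_of_opposite_ray_approximations (B c w1 w2 : C) (r r' eps : R) :
  (0 < r)%R -> (0 < r')%R ->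
  (Cmod (w1 - B) < Cmod B / 2)%R -> (Cmod (w2 - B) < Cmod B / 2)%R ->
  (Cmod (w1 * RtoC r - c) < eps)%R -> (Cmod (w2 * RtoC (- r') - c) < eps)%R ->
  (Cmod c < 7 * eps)%R.
Proof.
  intros Hr Hr' H1 H2 Hc1 Hc2. pose proof (Cmod_ge_0 B).
  assert (Hsum : (Cmod (w1 * RtoC r + w2 * RtoC r') < 2 * eps)%R).
  { replace (w1 * RtoC r + w2 * RtoC r') with ((w1 * RtoC r - c) + - (w2 * RtoC (- r') - c))
      by (rewrite RtoC_opp; ring).
    eapply Rle_lt_trans; [apply Cmod_triangle |]. rewrite Cmod_opp. lra. }
  assert (HrB : ((r + r') * Cmod B <= Cmod (w1 * RtoC r + w2 * RtoC r') +
                 r * Cmod (w1 - B) + r' * Cmod (w2 - B))%R).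
  { rewrite <- (Cmod_RtoC_pos (r + r')), <- Cmod_mult by lra.
    replace (RtoC (r + r') * B) with
      ((w1 * RtoC r + w2 * RtoC r') + (- (RtoC r * (w1 - B)) + - (RtoC r' * (w2 - B))))
      by (rewrite RtoC_plus; ring).
    eapply Rle_trans; [apply Cmod_triangle |]. rewrite Rplus_assoc. apply Rplus_le_compat_l.
    eapply Rle_trans; [apply Cmod_triangle |].
    rewrite !Cmod_opp, !Cmod_mult, !Cmod_RtoC_pos by lra. lra. }
  assert (Hc : (Cmod c <= Cmod w1 * r + eps)%R).
  { pose proof (Cmod_sub_le c (w1 * RtoC r)) as Htri.
    replace (c - w1 * RtoC r) with (- (w1 * RtoC r - c)) in Htri by ring.
    rewrite Cmod_opp, Cmod_mult, Cmod_RtoC_pos in Htri by lra. lra. }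
  pose proof (Cmod_sub_le w1 B).
  assert (r * Cmod (w1 - B) <= r * (Cmod B / 2))%R by (apply Rmult_le_compat_l; lra).
  assert (r' * Cmod (w2 - B) <= r' * (Cmod B / 2))%R by (apply Rmult_le_compat_l; lra).
  assert (Cmod w1 * r <= 3 / 2 * Cmod B * r)%R by (apply Rmult_le_compat_r; lra).
  nra.
Qed.

Section No_other_asymptotic_values.
Variable lam : C.
Hypothesis hp : lam <> pii.
Hypothesis hm : lam <> - pii.

Lemma continuity_fst_Mlam_path (g : R -> C) : (forall t, continuous g t) ->
  (forall t, g t <> Blam lam) -> continuity (fun t => fst (Mlam lam (g t))).
Proof.
  intros Hc Hn t. apply continuity_pt_filterlim.
  apply (continuous_comp (fun t => Mlam lam (g t)) fst).
  - apply (continuous_comp g (Mlam lam)); [apply Hc |].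
    intros P HP. apply locally_C.
    exact (ex_derive_continuous (Mlam lam) (g t)
             (ex_intro _ _ (is_derive_Mlam lam hm _ (Hn t))) P HP).
  - destruct (Mlam lam (g t)). apply continuous_fst.
Qed.

Lemma Mlam_large_near_Blam (L : R) : exists r : R, (0 < r)%R /\
  forall w : C, w <> Blam lam -> (Cmod (w - Blam lam) < r)%R -> (L < Cmod (Mlam lam w))%R.
Proof.
  set (A := Cmod (lam + pii)). assert (HA : (0 < A)%R) by apply Cmod_gt_0, lam_plus_pii_neq_0, hm.
  set (b := Cmod (Blam lam - 1)).
  assert (Hb : (0 < b)%R) by (apply Cmod_gt_0, Cminus_eq_contra, Blam_neq_1, hm).
  pose proof (Rabs_pos L) as HL.
  set (r := Rmin (b / 2) (b / (2 * A * (Rabs L + 1)))).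
  assert (Hr : (0 < r)%R) by (apply Rmin_glb_lt; [lra | apply Rdiv_lt_0_compat; nra]).
  exists r. split; [exact Hr |]. intros w Hw Hwr.
  pose proof (Rmin_l (b / 2) (b / (2 * A * (Rabs L + 1)))) as Hr1.
  pose proof (Rmin_r (b / 2) (b / (2 * A * (Rabs L + 1)))) as Hr2. fold r in Hr1, Hr2.
  set (d := Cmod (w - Blam lam)) in *.
  assert (Hd : (0 < d)%R) by apply Cmod_gt_0, Cminus_eq_contra, Hw.
  assert (Hw1 : (b / 2 < Cmod (w - 1))%R).
  { pose proof (Cmod_sub_le (Blam lam - 1) (w - 1)) as Htri.
    replace (Blam lam - 1 - (w - 1)) with (- (w - Blam lam)) in Htri by ring.
    rewrite Cmod_opp in Htri. fold b d in Htri. lra. }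
  assert (HAd : (A * d * (Rabs L + 1) < b / 2)%R).
  { assert (Hdr : (d < b / (2 * A * (Rabs L + 1)))%R) by lra.
    apply (Rmult_lt_compat_l (2 * A * (Rabs L + 1))) in Hdr; [|nra].
    replace (2 * A * (Rabs L + 1) * (b / (2 * A * (Rabs L + 1))))%R with b in Hdr by (field; lra).
    nra. }
  unfold Mlam. change ((lam + pii) * w - (lam - pii)) with (Dlam lam w).
  rewrite (Dlam_eq lam hm), Cmod_div, Cmod_opp, Cmod_mult
    by (apply Cmult_neq_0; [apply lam_plus_pii_neq_0, hm | now apply Cminus_eq_contra]).
  fold A d. apply (Rle_lt_trans _ (Rabs L)); [apply Rle_abs |].
  apply (Rmult_lt_reg_r (A * d)); [nra |].
  unfold Rdiv. rewrite Rmult_assoc, Rinv_l, Rmult_1_r by nra. nra.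
Qed.

Lemma Im_Mlam_bounded_near_value (c : C) : c <> 0 -> exists Y : R, forall w : C,
  (Cmod (w - Blam lam) < Cmod (Blam lam) / 2)%R -> (Cmod (glam lam w - c) < Cmod c / 2)%R ->
  (Rabs (snd (Mlam lam w)) <= Y)%R.
Proof.
  intros Hc0. pose proof (proj1 (Cmod_gt_0 c) Hc0) as Hc.
  pose proof (proj1 (Cmod_gt_0 _) (Blam_neq_0 lam hp hm)) as HB.
  set (a := (Cmod c / (3 * Cmod (Blam lam)))%R). set (b := (3 * Cmod c / Cmod (Blam lam))%R).
  exists ((Rabs (ln a) + Rabs (ln b)) / (2 * PI))%R. intros w Hw Hg.
  apply Rabs_snd_le_of_Cmod_Cexp_bounds; [apply Rdiv_lt_0_compat; lra |].
  set (q := Cmod (Cexp (2 * pii * Mlam lam w))).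
  assert (Hgq : Cmod (glam lam w) = (Cmod w * q)%R) by (unfold glam, q; apply Cmod_mult).
  assert (Hq : (0 < q)%R) by (unfold q; rewrite Cmod_Cexp; apply exp_pos).
  pose proof (Cmod_sub_le w (Blam lam)). pose proof (Cmod_sub_le (Blam lam) w) as Hw'.
  pose proof (Cmod_sub_le (glam lam w) c) as Hg1. pose proof (Cmod_sub_le c (glam lam w)) as Hg2.
  replace (Blam lam - w) with (- (w - Blam lam)) in Hw' by ring.
  replace (c - glam lam w) with (- (glam lam w - c)) in Hg2 by ring.
  rewrite Cmod_opp in Hw', Hg2. rewrite Hgq in Hg1, Hg2.
  unfold a, b. split.
  - apply (Rmult_lt_reg_r (3 * Cmod (Blam lam))); [lra |].
    unfold Rdiv. rewrite Rmult_assoc, Rinv_l, Rmult_1_r by lra. nra.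
  - apply (Rmult_lt_reg_r (Cmod (Blam lam))); [lra |].
    unfold Rdiv. rewrite Rmult_assoc, Rinv_l, Rmult_1_r by lra. nra.
Qed.

Lemma fst_Mlam_path_gap (g : R -> C) (T Y : R) :
  (forall t, g t <> Blam lam) ->
  (forall d, (0 < d)%R -> exists T', forall t, (T' < t)%R -> (Cmod (g t - Blam lam) < d)%R) ->
  (forall t, (T < t)%R -> (Rabs (snd (Mlam lam (g t))) <= Y)%R) ->
  exists t1 t2 : R, (T < t1 < t2)%R /\
    (2 <= Rabs (fst (Mlam lam (g t2)) - fst (Mlam lam (g t1))))%R.
Proof.
  intros Hn Hl HY.
  destruct (Mlam_large_near_Blam (Rabs (fst (Mlam lam (g (T + 1)%R))) + Y + 2)) as [r [Hr HM]].
  destruct (Hl r Hr) as [T' HT'].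
  pose proof (Rmax_l (T + 1) T'). pose proof (Rmax_r (T + 1) T').
  exists (T + 1)%R, (Rmax (T + 1) T' + 1)%R. split; [split; lra |].
  pose proof (HM _ (Hn _) (HT' (Rmax (T + 1) T' + 1)%R ltac:(lra))).
  pose proof (Cmod_le_Rabs_plus (Mlam lam (g (Rmax (T + 1) T' + 1)%R))).
  pose proof (HY (Rmax (T + 1) T' + 1)%R ltac:(lra)).
  pose proof (Rabs_triang_inv (fst (Mlam lam (g (Rmax (T + 1) T' + 1)%R)))
                              (fst (Mlam lam (g (T + 1)%R)))).
  lra.
Qed.

Lemma asymptotic_value_Fin_eq_0 (c : C) : asymptotic_value lam (Fin c) -> c = 0.
Proof.
  intros [g [Hcont [Hn [Hl Hclose]]]].
  destruct (Ceq_dec c 0) as [-> | Hc0]; [reflexivity | exfalso].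
  pose proof (proj1 (Cmod_gt_0 c) Hc0) as Hc.
  pose proof (proj1 (Cmod_gt_0 _) (Blam_neq_0 lam hp hm)) as HB.
  rewrite filterlim_p_infty_Cmod in Hl.
  set (eps := (Cmod c / 7)%R).
  destruct (Hclose eps ltac:(unfold eps; lra)) as [T1 HT1]. simpl in HT1.
  destruct (Hl (Cmod (Blam lam) / 2)%R ltac:(lra)) as [T2 HT2].
  set (T := Rmax T1 T2).
  assert (Hgood : forall t, (T < t)%R ->
    (Cmod (glam lam (g t) - c) < eps)%R /\ (Cmod (g t - Blam lam) < Cmod (Blam lam) / 2)%R).
  { intros t Ht. pose proof (Rmax_l T1 T2). pose proof (Rmax_r T1 T2).
    split; [apply HT1 | apply HT2]; unfold T in Ht; lra. }
  destruct (Im_Mlam_bounded_near_value c Hc0) as [Y HY].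
  destruct (fst_Mlam_path_gap g T Y Hn Hl) as [t1 [t2 [Ht12 Hgap]]].
  { intros t Ht. destruct (Hgood t Ht). apply HY; [assumption | unfold eps in *; lra]. }
  destruct (IVT_int_and_half_int _ t1 t2 (continuity_fst_Mlam_path g Hcont Hn) Hgap)
    as [k [ta [tb [Hta [Htb [Hka Hkb]]]]]].
  rewrite Rmin_left, Rmax_right in Hta, Htb by lra.
  destruct (Hgood ta ltac:(lra)) as [Ga1 Ga2]. destruct (Hgood tb ltac:(lra)) as [Gb1 Gb2].
  unfold glam in Ga1, Gb1.
  rewrite (Cexp_2pii_mul_int _ k Hka) in Ga1.
  rewrite (Cexp_2pii_mul_half_int _ k Hkb), <- RtoC_opp in Gb1.
  assert (Cmod c < 7 * eps)%R
    by (eapply Cmod_lt_of_opposite_ray_approximations;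
        [| | exact Ga2 | exact Gb2 | exact Ga1 | exact Gb1]; apply exp_pos).
  unfold eps in *. lra.
Qed.

End No_other_asymptotic_values.

Lemma is_derive_C_unique (f : C -> C) (z l l' : C) : is_derive f z l -> is_derive f z l' -> l = l'.
Proof. intros H H'. apply is_C_derive_unique in H, H'. congruence. Qed.

Lemma sph_close_refl (eps : R) (a : sphere) : (0 < eps)%R -> sph_close eps a a.
Proof.
  intros He. destruct a as [z |]; simpl; [| exact I].
  replace (z - z) with (RtoC 0) by ring. rewrite Cmod_0. exact He.
Qed.

Lemma exists_pos_le_Cmod_sub (z : C) (l : list C) :
  ~ In z l -> exists eps : R, (0 < eps)%R /\ forall w, In w l -> (eps <= Cmod (w - z))%R.
Proof.
  induction l as [| w0 l IH]; intros Hz.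
  - exists 1%R. split; [lra | intros w []].
  - destruct IH as [eps [He Hl]]; [intros H; apply Hz; right; exact H |].
    assert (Hw0 : (0 < Cmod (w0 - z))%R)
      by (apply Cmod_gt_0, Cminus_eq_contra; intros E; apply Hz; left; exact E).
    exists (Rmin eps (Cmod (w0 - z))). split; [now apply Rmin_glb_lt |].
    intros w [<- | Hw]; [apply Rmin_r | eapply Rle_trans; [apply Rmin_l | now apply Hl]].
Qed.

Lemma sph_closure_Fin_in_list (S : sphere -> Prop) (l : list C) (z : C) :
  (forall q, S q -> q = Inf \/ exists w, q = Fin w /\ In w l) -> sph_closure S (Fin z) -> In z l.
Proof.
  intros HS Hcl. destruct (in_dec Ceq_dec z l) as [Hz | Hz]; [exact Hz | exfalso].
  destruct (exists_pos_le_Cmod_sub z l Hz) as [eps [He Hl]].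
  destruct (Hcl eps He) as [q [Sq Hq]].
  destruct (HS q Sq) as [-> | [w [-> Hw]]]; [exact Hq |].
  specialize (Hl w Hw). simpl in Hq. lra.
Qed.

Section Singular_values.
Variable lam : C.
Hypothesis hp : lam <> pii.
Hypothesis hm : lam <> - pii.

Lemma critical_point_iff (p : sphere) : critical_point lam p <-> p = Fin 1 \/ p = Fin (Clam lam).
Proof.
  split.
  - intros [Hp Hd]. destruct p as [w |].
    + assert (Hw : w <> Blam lam) by congruence.
      pose proof (is_derive_C_unique _ _ _ _ (is_derive_glam lam hm w Hw) Hd) as Hder.
      apply (glam_deriv_eq_0_iff lam hm w Hw) in Hder as [-> | ->]; auto.
    + exfalso. apply (Cexp_neq_0 (2 * pii / (pii + lam))).
      exact (is_derive_C_unique _ _ _ _ (local_deriv_Inf lam hm) Hd).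
  - assert (H1 : RtoC 1 <> Blam lam) by (apply not_eq_sym, Blam_neq_1, hm).
    assert (HC : Clam lam <> Blam lam) by (apply Clam_neq_Blam; assumption).
    intros [-> | ->]; split; try congruence; unfold local_deriv; simpl.
    + rewrite <- (proj2 (glam_deriv_eq_0_iff lam hm 1 H1) (or_introl eq_refl)).
      exact (is_derive_glam lam hm 1 H1).
    + rewrite <- (proj2 (glam_deriv_eq_0_iff lam hm _ HC) (or_intror eq_refl)).
      exact (is_derive_glam lam hm _ HC).
Qed.

Lemma critical_or_asymptotic_value_cases (q : sphere) :
  critical_value lam q \/ asymptotic_value lam q ->
  q = Inf \/ exists w, q = Fin w /\ In w (RtoC 0 :: RtoC 1 :: glam lam (Clam lam) :: nil).
Proof.
  intros [[p [Hp ->]] | Ha].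
  - right. apply critical_point_iff in Hp as [-> | ->]; simpl.
    + exists 1. rewrite glam_1. simpl; auto.
    + eexists. split; [reflexivity | simpl; auto].
  - destruct q as [c |]; [right | now left].
    exists c. rewrite (asymptotic_value_Fin_eq_0 lam hp hm c Ha). simpl; auto.
Qed.

Lemma singular_value_iff (a : sphere) : singular_value lam a <->
  a = Fin 0 \/ a = Inf \/ a = Fin 1 \/ a = gS lam (Fin (Clam lam)).
Proof.
  split.
  - intros Ha. destruct a as [z |]; [| now right; left].
    pose proof (sph_closure_Fin_in_list _ _ z critical_or_asymptotic_value_cases Ha) as Hz.
    simpl in Hz. destruct Hz as [<- | [<- | [<- | []]]]; auto.
  - intros Ha eps He. exists a. split; [| now apply sph_close_refl].
    destruct Ha as [-> | [-> | [-> | ->]]].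
    + right. apply asymptotic_value_0; assumption.
    + right. apply asymptotic_value_Inf; assumption.
    + left. exists (Fin 1). split; [apply critical_point_iff; now left |].
      simpl. now rewrite glam_1.
    + left. exists (Fin (Clam lam)). split; [apply critical_point_iff; now right | reflexivity].
Qed.

End Singular_values.

Section Sphere.
Variable lam : C.
Hypothesis hp : lam <> pii.
Hypothesis hm : lam <> - pii.

Lemma gS_holomorphic (p : sphere) : p <> Fin (Blam lam) ->
  ex_derive (local_expr (gS lam) p) (coord_at p p).
Proof.
  destruct p as [w |]; intros Hp.
  - exists (glam_deriv lam w). apply is_derive_glam; congruence.
  - exists (Cexp (2 * pii / (pii + lam))). exact (local_deriv_Inf lam hm).
Qed.

Lemma gS_fixed_point_iff (p : sphere) : p <> Fin (Blam lam) ->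
  gS lam p = p <->
  p = Fin 0 \/ p = Inf \/
  exists s : Z, wstar_den lam s <> 0 /\ p = Fin (wstar_num lam s / wstar_den lam s).
Proof.
  destruct p as [w |]; intros Hp; [| simpl; tauto].
  assert (Hw : w <> Blam lam) by congruence.
  pose proof (glam_fixed_iff lam hm w Hw) as Hfix. simpl. split.
  - intros E. injection E as E. apply Hfix in E as [-> | [s [Hs ->]]]; [now left |].
    right; right. now exists s.
  - intros H. f_equal. apply Hfix.
    destruct H as [E | [E | [s [Hs E]]]]; [left | discriminate | right; exists s]; now injection E.
Qed.

Lemma local_deriv_0 : local_deriv (gS lam) (Fin 0) (Cexp (2 * pii / (pii - lam))).
Proof.
  rewrite <- (glam_deriv_0 lam hp). apply is_derive_glam; [exact hm |].
  apply not_eq_sym, Blam_neq_0; assumption.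
Qed.

Lemma local_deriv_wstar (s : Z) : wstar_den lam s <> 0 ->
  local_deriv (gS lam) (Fin (wstar_num lam s / wstar_den lam s))
    (1 - wstar_num lam s * wstar_den lam s).
Proof.
  intros Hs. unfold local_deriv; simpl.
  change (wstar_num lam s / wstar_den lam s) with (Mlam_inv lam (IZR s)).
  replace (1 - wstar_num lam s * wstar_den lam s) with (glam_deriv lam (Mlam_inv lam (IZR s)))
    by (rewrite glam_deriv_Mlam_inv, Cexp_2pii_IZR by assumption;
        unfold wstar_num, wstar_den; ring).
  apply is_derive_glam; [exact hm | now apply Mlam_inv_neq_Blam].
Qed.

End Sphere.

Theorem lemma5p5 (lam : C) (hp : lam <> pii) (hm : lam <> - pii) :
  (* g_lambda is holomorphic on the sphere minus B_lambda, and B_lambda is an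
     essential singularity (hence the unique one) *)
  ((forall p : sphere, p <> Fin (Blam lam) -> ex_derive (local_expr (gS lam) p) (coord_at p p))
   /\ essential_singularity_at lam (Blam lam)) /\
  (* (i) fixed points and multipliers *)
  ((forall p : sphere, p <> Fin (Blam lam) ->
      (gS lam p = p <->
        p = Fin 0 \/ p = Inf \/
        exists s : Z, wstar_den lam s <> 0 /\ p = Fin (wstar_num lam s / wstar_den lam s)))
   /\ local_deriv (gS lam) (Fin 0) (Cexp (2 * pii / (pii - lam)))
   /\ local_deriv (gS lam) Inf (Cexp (2 * pii / (pii + lam)))
   /\ (forall s : Z, wstar_den lam s <> 0 ->
        local_deriv (gS lam) (Fin (wstar_num lam s / wstar_den lam s))
          (1 - wstar_num lam s * wstar_den lam s))) /\
  (* (ii) singular values *)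
  (asymptotic_value lam (Fin 0) /\ asymptotic_value lam Inf /\
   gS lam (Fin 0) = Fin 0 /\ gS lam Inf = Inf /\
   critical_point lam (Fin 1) /\ gS lam (Fin 1) = Fin 1 /\
   (forall p : sphere, critical_point lam p <-> p = Fin 1 \/ p = Fin (Clam lam)) /\
   (forall a : sphere, singular_value lam a <->
      a = Fin 0 \/ a = Inf \/ a = Fin 1 \/ a = gS lam (Fin (Clam lam)))).
Proof.
  split; [split | split; [split; [| split; [| split]] | ]].
  - apply gS_holomorphic; assumption.
  - apply essential_singularity; assumption.
  - apply gS_fixed_point_iff; assumption.
  - apply local_deriv_0; assumption.
  - apply local_deriv_Inf; assumption.
  - intros s Hs. apply local_deriv_wstar; assumption.
  - refine (conj _ (conj _ (conj _ (conj eq_refl (conj _ (conj _ (conj _ _))))))).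
    + apply asymptotic_value_0; assumption.
    + apply asymptotic_value_Inf; assumption.
    + simpl. f_equal. unfold glam. ring.
    + apply critical_point_iff; auto.
    + simpl. now rewrite glam_1.
    + apply critical_point_iff; assumption.
    + apply singular_value_iff; assumption.
Qed.
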